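(* Let $a<b$ be positive integers with $\gcd(a,b)=1$, let $\mathcal{E}$ be the equation $ax+by=z$, and let $n\ge R_2(\mathcal{E})$. Let $b^{-1}$ be any integer with $b^{-1}b\equiv 1\pmod a$ and $a^{-1}$ any integer with $a^{-1}a\equiv 1\pmod b$. Then $$M_{\mathcal{E}}(n)\le \sum_{z=a+b}^{\lfloor n/(a(a+b))\rfloor}\left(\frac{z}{ab}-\left\{\frac{b^{-1}z}{a}\right\}-\left\{\frac{a^{-1}z}{b}\right\}+1\right),$$ where $\{t\}=t-\lfloor t\rfloor$ denotes the fractional part.
   Context: For a positive integer $n$ write $[n]=\{1,\dots,n\}$. A $k$-coloring of $[n]$ is a map $\chi:[n]\to\{0,\dots,k-1\}$. A solution to a 3-variable equation $\mathcal{E}$ in $[n]$ is an ordered triple $(x,y,z)\in[n]^3$ satisfying $\mathcal{E}$; it is monochromatic under $\chi$ if $\chi(x)=\chi(y)=\chi(z)$. $\mu_\chi(\mathcal{E},n,k)$ is the number of monochromatic solutions under $\chi$, $M_{\mathcal{E}}(n,k)=\min_\chi \mu_\chi(\mathcal{E},n,k)$ over all $k$-colorings $\chi$ of $[n]$, and $M_{\mathcal{E}}(n)=M_{\mathcal{E}}(n,2)$. The 2-color Rado number $R_2(\mathcal{E})$ is the least integer $N$ such that every 2-coloring of $[N]$ has at least one monochromatic solution to $\mathcal{E}$. *)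

From HB Require Import structures.
From mathcomp Require Import all_boot all_order all_algebra.
Set Implicit Arguments. Unset Strict Implicit. Unset Printing Implicit Defensive.
Import Order.TTheory GRing.Theory Num.Theory.

(* [n] = {1,...,n} is represented by 'I_n, index i standing for i+1.
   A k-coloring of [n] is a finite function 'I_n -> 'I_k. *)
Definition coloring (n k : nat) := {ffun 'I_n -> 'I_k}.

Definition is_sol (a b : nat) (x y z : nat) : bool := a * x + b * y == z.

Definition mu (a b n k : nat) (chi : coloring n k) : nat :=
  #|[set t : 'I_n * 'I_n * 'I_n |
      is_sol a b t.1.1.+1 t.1.2.+1 t.2.+1 &&
      (chi t.1.1 == chi t.1.2) && (chi t.1.2 == chi t.2)]|.

(* M_E(n,k) = min over colorings; n^3 (= number of triples) is an upper bound
   on every mu, so it is a neutral initial value for the minimum. *)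
Definition Mk (a b n k : nat) : nat :=
  \big[minn/(n ^ 3)%N]_(chi : coloring n k) @mu a b n k chi.

Definition M (a b n : nat) : nat := Mk a b n 2.

Definition rado_prop (a b N : nat) : Prop :=
  forall chi : coloring N 2, (0 < @mu a b N 2 chi)%N.

Definition is_R2 (a b N : nat) : Prop :=
  rado_prop a b N /\ (forall m, (m < N)%N -> ~ rado_prop a b m).

Local Open Scope ring_scope.
Definition fracpart (t : rat) : rat := t - (Num.floor t)%:~R.

From mathcomp Require Import all_boot all_order all_algebra.
From mathcomp Require Import zify ring.
Import Order.TTheory GRing.Theory Num.Theory.

Set Implicit Arguments.
Unset Strict Implicit.
Unset Printing Implicit Defensive.

(* Color v in [n] according to whether N := n %/ (a (a + b)) < v <= n %/ a.
   A monochromatic solution of a x + b y = z then has z <= N: if x and y both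
   lie in the block, z >= (a + b)(N + 1) > n %/ a; if both lie below it,
   z <= (a + b) N <= n %/ a (and x, y <= n %/ a always, as a < b).
   For fixed z write z = b r + a s + k a b with r = b^-1 z mod a and
   s = a^-1 z mod b; coprimality makes k an integer, and it is the summand
   minus 1.  A positive solution has x = s (mod b), y = r (mod a) and
   k = x %/ b + y %/ a, so it is determined by x %/ b in {0, ..., k}. *)

Lemma bigminn_le (I : finType) (x0 : nat) (F : I -> nat) (j : I) :
  (\big[minn/x0]_(i : I) F i <= F j)%N.
Proof.
elim: (index_enum I) (mem_index_enum j) => // i s IHs.
rewrite inE big_cons => /predU1P [<- | js]; first exact: geq_minl.
exact: leq_trans (geq_minr _ _) (IHs js).
Qed.

Lemma card_le_inj_bounded (T : finType) (A : {set T}) (f : T -> nat) (K : nat) :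
  {in A &, injective f} -> (forall t, t \in A -> (f t <= K)%N) -> (#|A| <= K.+1)%N.
Proof.
move=> f_inj f_le; rewrite -[K.+1]card_ord.
rewrite -(card_in_imset (f := fun t => inord (f t) : 'I_K.+1)); first exact: max_card.
move=> s t sA tA /(congr1 val) /=; rewrite !inordK ?ltnS ?f_le //; exact: f_inj.
Qed.

Lemma card_le_sum_cover (T : finType) (I : eqType) (r : seq I) (F : I -> {set T})
    (A : {set T}) :
  (forall t, t \in A -> exists2 i, i \in r & t \in F i) ->
  (#|A| <= \sum_(i <- r) #|F i|)%N.
Proof.
elim: r A => [|i r IHr] A coverA.
  rewrite big_nil leqn0 cards_eq0; apply/eqP/setP => t; rewrite inE.
  by apply/negbTE/negP => /coverA [].
rewrite big_cons -(cardsID (F i) A) leq_add ?subset_leq_card ?subsetIr //.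
apply: IHr => t /setDP [/coverA [j]]; rewrite inE => /predU1P [-> -> //| jr tFj _].
by exists j.
Qed.

Local Open Scope ring_scope.

Lemma fracpart_divz (m : int) (d : nat) : (0 < d)%N ->
  fracpart (m%:~R / d%:R : rat) = (m %% d%:Z)%Z%:~R / d%:R.
Proof.
move=> d_gt0.
have d_neq0 : (d%:R : rat) != 0 by rewrite pnatr_eq0 -lt0n.
have mE : (m%:~R : rat) = (m %/ d%:Z)%Z%:~R * d%:R + (m %% d%:Z)%Z%:~R.
  by rewrite {1}(divz_eq m d%:Z) intrD intrM pmulrn.
rewrite /fracpart.
have -> : Num.floor (m%:~R / d%:R : rat) = (m %/ d%:Z)%Z.
  apply: floor_def; rewrite mE mulrDl mulfK // intrD lerDl ltrD2l.
  rewrite divr_ge0 ?ler0n ?ler0z ?modz_ge0 ?eqz_nat -?lt0n //=.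
  by rewrite ltr_pdivrMr ?ltr0n // mul1r -[d%:R]/((d%:Z)%:~R) ltr_int ltz_pmod.
rewrite mE mulrDl mulfK //; ring.
Qed.

Lemma dvdz_sub_mul_modz (m c cinv w : int) : (cinv * c = 1 %[mod m])%Z ->
  (m %| w - c * ((cinv * w) %% m)%Z)%Z.
Proof.
move=> cinvP; rewrite -eqz_mod_dvd; apply/eqP.
by rewrite modzMmr mulrA [c * _]mulrC -modzMml cinvP modzMml mul1r.
Qed.

Lemma modz_inv_linear (a b : nat) (ainv : int) (x y : nat) :
  (ainv * a%:Z = 1 %[mod b%:Z])%Z ->
  ((ainv * (a * x + b * y)%N) %% b%:Z)%Z = (x %% b)%N.
Proof.
move=> ainvP; rewrite -modz_nat PoszD !PoszM mulrDr mulrA -modzDml -modzMml ainvP.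
by rewrite modzMml mul1r mulrCA mulrC modzDml addrC modzMDl.
Qed.

Section SolutionCount.

Variables (a b : nat) (binv ainv : int).
Hypotheses (a_gt0 : (0 < a)%N) (b_gt0 : (0 < b)%N) (coprime_ab : coprime a b).
Hypotheses (binvP : (binv * b%:Z = 1 %[mod a%:Z])%Z)
           (ainvP : (ainv * a%:Z = 1 %[mod b%:Z])%Z).

Definition sol_quot (w : int) : int :=
  ((w - b%:Z * ((binv * w) %% a%:Z)%Z - a%:Z * ((ainv * w) %% b%:Z)%Z)
     %/ (a%:Z * b%:Z))%Z.

Lemma sol_quotE (w : int) :
  w - b%:Z * ((binv * w) %% a%:Z)%Z - a%:Z * ((ainv * w) %% b%:Z)%Z
  = sol_quot w * (a%:Z * b%:Z).
Proof.
rewrite /sol_quot divzK // Gauss_dvdz ?coprimezE //.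
apply/andP; split.
  by rewrite rpredB ?dvdz_sub_mul_modz ?dvdz_mulr.
by rewrite addrAC rpredB ?dvdz_sub_mul_modz ?dvdz_mulr.
Qed.

Lemma sol_quot_ge (w : int) : 0 <= w -> -1 <= sol_quot w.
Proof.
move=> w_ge0.
have ab_gt0 : 0 < a%:Z * b%:Z by rewrite mulr_gt0 // ltz_nat.
have r_lt : b%:Z * ((binv * w) %% a%:Z)%Z < b%:Z * a%:Z.
  by rewrite ltr_pM2l ?ltz_nat // ltz_pmod // ltz_nat.
have s_lt : a%:Z * ((ainv * w) %% b%:Z)%Z < a%:Z * b%:Z.
  by rewrite ltr_pM2l ?ltz_nat // ltz_pmod // ltz_nat.
have : -2 * (a%:Z * b%:Z) < sol_quot w * (a%:Z * b%:Z) by rewrite -sol_quotE; lia.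
by rewrite ltr_pM2r //; lia.
Qed.

Lemma sol_quot_linear (x y : nat) : sol_quot (a * x + b * y)%N = (x %/ b + y %/ a)%N.
Proof.
rewrite /sol_quot (modz_inv_linear _ _ ainvP) addnC (modz_inv_linear _ _ binvP) addnC.
set q := (x %/ b + y %/ a)%N.
rewrite -[RHS](@mulzK _ (a%:Z * b%:Z)) ?mulf_neq0 ?eqz_nat -?lt0n //; congr (_ %/ _)%Z.
by rewrite {1}(divn_eq x b) {1}(divn_eq y a) /q; lia.
Qed.

Definition sol_term (z : nat) : rat :=
  z%:R / (a * b)%:R
  - fracpart ((binv * z%:Z)%:~R / a%:R) - fracpart ((ainv * z%:Z)%:~R / b%:R) + 1.

Lemma sol_termE (z : nat) : sol_term z = (sol_quot z)%:~R + 1.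
Proof.
have a_neq0 : (a%:R : rat) != 0 by rewrite pnatr_eq0 -lt0n.
have b_neq0 : (b%:R : rat) != 0 by rewrite pnatr_eq0 -lt0n.
have -> : (sol_quot z)%:~R = (z%:Z - b%:Z * ((binv * z) %% a%:Z)%Z
    - a%:Z * ((ainv * z) %% b%:Z)%Z)%:~R / (a * b)%:R :> rat.
  rewrite sol_quotE intrM -PoszM mulfK //.
  by rewrite intr_eq0 eqz_nat muln_eq0 negb_or -!lt0n a_gt0.
rewrite /sol_term !fracpart_divz //.
move: ((binv * z) %% a%:Z)%Z ((ainv * z) %% b%:Z)%Z => r s.
rewrite !intrD !mulrNz !intrM -!pmulrn natrM; field; exact/andP.
Qed.

Lemma sol_eq_of_divn (x1 y1 x2 y2 : nat) :
  (a * x1 + b * y1 = a * x2 + b * y2)%N -> (x1 %/ b = x2 %/ b)%N -> x1 = x2 /\ y1 = y2.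
Proof.
move=> solE divE.
have modE : (x1 %% b = x2 %% b)%N.
  by apply/eqP; rewrite -eqz_nat -(modz_inv_linear _ y1 ainvP) solE modz_inv_linear.
have xE : x1 = x2 by rewrite (divn_eq x1 b) (divn_eq x2 b) divE modE.
by split=> //; apply/eqP; rewrite -(eqn_pmul2l b_gt0) -(eqn_add2l (a * x1)) {2}xE solE.
Qed.

Definition sol_fiber (n w : nat) : {set 'I_n * 'I_n * 'I_n} :=
  [set t : 'I_n * 'I_n * 'I_n | is_sol a b t.1.1.+1 t.1.2.+1 t.2.+1 && (t.2.+1 == w)].

Lemma sol_fiberP (n w : nat) (t : 'I_n * 'I_n * 'I_n) :
  t \in sol_fiber n w -> (a * t.1.1.+1 + b * t.1.2.+1)%N = w /\ t.2.+1 = w.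
Proof. by rewrite inE /is_sol => /andP [/eqP -> /eqP]. Qed.

Lemma card_sol_fiber_le (n w : nat) : (#|sol_fiber n w|%:R : rat) <= sol_term w.
Proof.
rewrite sol_termE.
suff : #|sol_fiber n w|%:Z <= sol_quot w + 1 by rewrite -(ler_int rat) intrD.
have [-> | [t0 /sol_fiberP [t0E _]]] := set_0Vmem (sol_fiber n w).
  (* Without solutions the bound reduces to k >= -1, i.e. r < a and s < b. *)
  by rewrite cards0; have := @sol_quot_ge w isT; lia.
set K := (t0.1.1.+1 %/ b + t0.1.2.+1 %/ a)%N.
have quotE : sol_quot w = K by rewrite -t0E sol_quot_linear.
rewrite quotE -PoszD addn1 lez_nat.
pose f (t : 'I_n * 'I_n * 'I_n) := (t.1.1.+1 %/ b)%N.
apply: (@card_le_inj_bounded _ _ f) => [t1 t2 | t].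
  move=> /sol_fiberP [E1 Z1] /sol_fiberP [E2 Z2] divE.
  have [[x1E] [y1E]] := sol_eq_of_divn (etrans E1 (esym E2)) divE.
  move: t1 t2 x1E y1E Z1 Z2 {E1 E2 divE} => [[x1 y1] z1] [[x2 y2] z2] /=.
  by move=> /val_inj -> /val_inj -> <- [/val_inj ->].
move=> /sol_fiberP [tE _]; have := sol_quot_linear t.1.1.+1 t.1.2.+1.
by rewrite tE quotE => -[->]; exact: leq_addr.
Qed.

End SolutionCount.

Section BlockColoring.

Variables (a b n : nat).
Hypotheses (a_gt0 : (0 < a)%N) (a_lt_b : (a < b)%N).

Definition in_block (v : nat) : bool := (n %/ (a * (a + b)) < v <= n %/ a)%N.

Definition block_coloring : coloring n 2 :=
  [ffun i : 'I_n => if in_block i.+1 then ord_max else ord0].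

Lemma block_coloring_eq (i j : 'I_n) :
  (block_coloring i == block_coloring j) = (in_block i.+1 == in_block j.+1).
Proof. by rewrite !ffunE; case: (in_block i.+1); case: (in_block j.+1). Qed.

Lemma monochromatic_block_sol_le (x y z : nat) : (0 < x)%N -> (0 < y)%N -> (z <= n)%N ->
  (a * x + b * y)%N = z -> in_block x = in_block y -> in_block y = in_block z ->
  (z <= n %/ (a * (a + b)))%N.
Proof.
move=> x_gt0 y_gt0 z_le_n solE blockxy blockyz.
have x_le : (x <= n %/ a)%N by nia.
have y_le : (y <= n %/ a)%N by nia.
move: blockxy blockyz; rewrite /in_block x_le y_le !andbT divnMA.
set T := (n %/ a)%N; set N := (T %/ (a + b))%N.
have [N_lt_x | x_le_N] := ltnP N x => /= N_lt_y.
  by rewrite -N_lt_y => /esym/andP []; nia.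
by rewrite -N_lt_y => /esym/negbT; rewrite negb_and -leqNgt -ltnNge; nia.
Qed.

Lemma mu_block_coloring_le :
  (mu a b block_coloring <= \sum_((a + b)%N <= w < (n %/ (a * (a + b))).+1)
                              #|sol_fiber a b n w|)%N.
Proof.
apply: card_le_sum_cover => t; rewrite inE !block_coloring_eq.
case/andP => /andP [solt /eqP blockxy] /eqP blockyz.
exists t.2.+1; last by rewrite inE solt eqxx.
move: solt => /eqP solE; rewrite mem_index_iota ltnS -solE.
rewrite leq_add ?leq_pmulr //= solE.
exact: monochromatic_block_sol_le solE blockxy blockyz.
Qed.

End BlockColoring.

Theorem theorem4 (a b n : nat) (binv ainv : int) :
  (0 < a)%N -> (a < b)%N -> coprime a b ->
  (exists N : nat, is_R2 a b N /\ (N <= n)%N) ->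
  (binv * b%:Z = 1 %[mod a%:Z])%Z ->
  (ainv * a%:Z = 1 %[mod b%:Z])%Z ->
  (M a b n)%:R <=
    \sum_((a + b)%N <= z < (n %/ (a * (a + b))).+1)
      ((z%:R / (a * b)%:R : rat)
       - fracpart (((binv * z%:Z)%:~R : rat) / a%:R)
       - fracpart (((ainv * z%:Z)%:~R : rat) / b%:R) + 1).
Proof.
move=> a_gt0 a_lt_b coprime_ab _ binvP ainvP.
have b_gt0 : (0 < b)%N by apply: leq_trans a_lt_b.
apply: (@le_trans _ _ (mu a b (block_coloring a b n))%:R).
  by rewrite ler_nat bigminn_le.
apply: le_trans (_ : (\sum_((a + b)%N <= w < (n %/ (a * (a + b))).+1)
                       #|sol_fiber a b n w|)%:R <= _).
  by rewrite ler_nat mu_block_coloring_le.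
rewrite natr_sum; apply: ler_sum => w _.
exact: (card_sol_fiber_le a_gt0 b_gt0 coprime_ab binvP ainvP).
Qed.
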